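(* Let $\mathbb{X},\mathbb{Y}$ be finite-dimensional real Banach spaces and let $T\in\mathbb{L}(\mathbb{X},\mathbb{Y})$ be bijective. Then $T$ preserves parallel pairs if and only if $T$ preserves TEA pairs.
   Context: $(x,y)$ is a parallel pair if $\|x+\lambda y\|=\|x\|+\|y\|$ for some scalar $\lambda$ with $|\lambda|=1$; $(x,y)$ is a TEA pair if $\|x+y\|=\|x\|+\|y\|$. $T$ preserves parallel (resp. TEA) pairs if for all $x,y\in\mathbb{X}$, $(x,y)$ a parallel (resp. TEA) pair implies $(Tx,Ty)$ is a parallel (resp. TEA) pair. *)

From HB Require Import structures.
From mathcomp Require Import all_boot all_order all_algebra.
From mathcomp Require Import all_classical all_reals all_analysis.
Set Implicit Arguments. Unset Strict Implicit. Unset Printing Implicit Defensive.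
Import Order.TTheory GRing.Theory Num.Theory.
Import numFieldNormedType.Exports.
Local Open Scope ring_scope.

Definition finite_dim (R : realType) (V : lmodType R) : Prop :=
  exists (n : nat) (f : {linear 'rV[R]_n -> V}), bijective f.

Definition parallel_pair (R : realType) (X : normedModType R) (x y : X) : Prop :=
  exists l : R, `|l| = 1 /\ `|x + l *: y| = `|x| + `|y|.

Definition TEA_pair (R : realType) (X : normedModType R) (x y : X) : Prop :=
  `|x + y| = `|x| + `|y|.

Definition preserves_parallel (R : realType) (X Y : normedModType R) (T : X -> Y) : Prop :=
  forall x y : X, parallel_pair x y -> parallel_pair (T x) (T y).

Definition preserves_TEA (R : realType) (X Y : normedModType R) (T : X -> Y) : Prop :=
  forall x y : X, TEA_pair x y -> TEA_pair (T x) (T y).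

(* If (x, y) is a TEA pair, then so is every pair of points of the segment
   [x, y]; these are mapped to parallel pairs on the segment [Tx, Ty].  If that
   segment avoids 0, its points stay at distance at least m > 0 from 0, so two
   of them closer than m cannot be parallel with scalar -1: they form a TEA
   pair, i.e. t |-> ||Tx + t (Ty - Tx)|| satisfies the midpoint equality on a
   fine enough grid.  Hence it is affine on that grid, and evaluating at
   0, 1/2, 1 gives ||Tx + Ty|| = ||Tx|| + ||Ty||.  If the segment meets 0,
   injectivity forces x = 0 or y = 0. *)
From HB Require Import structures.
From mathcomp Require Import all_boot all_order all_algebra.
From mathcomp Require Import all_classical all_reals all_analysis.
From mathcomp Require Import ring lra.
Set Implicit Arguments. Unset Strict Implicit. Unset Printing Implicit Defensive.
Import Order.TTheory GRing.Theory Num.Theory.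
Import numFieldNormedType.Exports.
Local Open Scope ring_scope.

Lemma normr_eq1 (R : realDomainType) (l : R) : `|l| = 1 -> l = 1 \/ l = -1.
Proof.
have [l_ge0|l_lt0] := leP 0 l; first by rewrite ger0_norm // => ->; left.
by rewrite ltr0_norm // => <-; rewrite opprK; right.
Qed.

Lemma affine_of_midpoint {V : zmodType} {N : nat} {f : nat -> V} :
  (forall j, (j.+2 <= N)%N -> f j + f j.+2 = f j.+1 *+ 2) ->
  forall j, (j <= N)%N -> f j = f 0%N + (f 1%N - f 0%N) *+ j.
Proof.
move=> fmid j jN.
suff: f j = f 0%N + (f 1%N - f 0%N) *+ j /\
      ((j < N)%N -> f j.+1 = f 0%N + (f 1%N - f 0%N) *+ j.+1) by case.
elim: j jN => [|j IH] jN; first by rewrite mulr0n addr0 mulr1n addrC subrK.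
have [fj fj1] := IH (ltnW jN); split; first exact: fj1.
move=> jN2; apply: (addrI (f j)); rewrite fmid // mulr2n fj1 // fj !mulrSr.
move: (f 0%N) (f 1%N - f 0%N) => a d; rewrite !addrA.
by rewrite [a + _ + d + a]addrAC [_ + d + _ *+ j]addrAC.
Qed.

Section Segment.
Context {R : numFieldType} {V : lmodType R}.
Implicit Types (x y : V) (s t : R).

Definition segment x y t : V := x + t *: (y - x).

Lemma segmentE x y t : segment x y t = (1 - t) *: x + t *: y.
Proof. by rewrite /segment scalerBr scalerBl scale1r addrA addrAC. Qed.

Lemma segment0 x y : segment x y 0 = x.
Proof. by rewrite /segment scale0r addr0. Qed.

Lemma segment1 x y : segment x y 1 = y.
Proof. by rewrite /segment scale1r addrC subrK. Qed.

Lemma segmentB x y s t : segment x y s - segment x y t = (s - t) *: (y - x).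
Proof. by rewrite /segment opprD addrACA subrr add0r scalerBl. Qed.

Lemma segment_midpoint x y s t :
  segment x y s + segment x y t = 2 *: segment x y ((s + t) / 2).
Proof.
rewrite /segment addrACA -scalerDl [RHS]scalerDr scalerA [2 * _]mulrC.
by rewrite divfK ?pnatr_eq0 // scaler_nat mulr2n.
Qed.

End Segment.

Lemma linear_segment (R : numFieldType) (V W : lmodType R)
  (f : {linear V -> W}) (x y : V) (t : R) :
  f (segment x y t) = segment (f x) (f y) t.
Proof. by rewrite /segment linearD linearZ linearB. Qed.

Section ParallelTEA.
Variables (R : realType) (X : normedModType R).
Implicit Types (x y : X) (a b c d s t : R).

Lemma TEA_pair_conic x y a b :
  TEA_pair x y -> 0 <= a -> 0 <= b -> `|a *: x + b *: y| = a * `|x| + b * `|y|.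
Proof.
rewrite /TEA_pair => xy a_ge0 b_ge0; apply/le_anti/andP; split.
  by apply: (le_trans (ler_normD _ _)); rewrite !normrZ !ger0_norm.
wlog ba : a b x y xy a_ge0 b_ge0 / b <= a.
  move=> hwlog; have [|ab] := leP b a; first exact: hwlog.
  rewrite [a * _ + _]addrC [a *: x + _]addrC hwlog // ?ltW //.
  by rewrite /TEA_pair addrC xy addrC.
have : `|a *: (x + y)| <= `|a *: x + b *: y| + (a - b) * `|y|.
  have -> : a *: (x + y) = (a *: x + b *: y) + (a - b) *: y.
    by rewrite scalerDr scalerBl addrACA subrr addr0.
  apply: (le_trans (ler_normD _ _)).
  by rewrite normrZ ger0_norm ?subr_ge0.
by rewrite normrZ xy ger0_norm //; lra.
Qed.

Lemma TEA_pair_cone x y a b c d : TEA_pair x y ->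
  0 <= a -> 0 <= b -> 0 <= c -> 0 <= d ->
  TEA_pair (a *: x + b *: y) (c *: x + d *: y).
Proof.
move=> xy *; rewrite /TEA_pair addrACA -!scalerDl !TEA_pair_conic ?addr_ge0 //.
lra.
Qed.

Lemma TEA_parallel_pair x y : TEA_pair x y -> parallel_pair x y.
Proof. by exists 1; rewrite normr1 scale1r. Qed.

Lemma parallel_pair_TEA x y :
  parallel_pair x y -> `|x - y| < `|x| + `|y| -> TEA_pair x y.
Proof.
move=> [l [/normr_eq1 [->|->] xly]] lt; first by rewrite /TEA_pair -xly scale1r.
by move: lt; rewrite -scaleN1r xly ltxx.
Qed.

Lemma norm_segment_midpoint x y s t :
  TEA_pair (segment x y s) (segment x y t) ->
  `|segment x y s| + `|segment x y t| = `|segment x y ((s + t) / 2)| *+ 2.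
Proof. by move=> <-; rewrite segment_midpoint normrZ ger0_norm // mulr_natl. Qed.

Lemma continuous_norm_segment x y : continuous (fun t => `|segment x y t|).
Proof.
move=> t; apply: (continuous_comp _ (@norm_continuous _ X _)).
apply: cvgD; first exact: cvg_cst.
by apply: cvgZ; [exact: cvg_id | exact: cvg_cst].
Qed.

Lemma TEA_pair_segment x y s t : TEA_pair x y ->
  0 <= s <= 1 -> 0 <= t <= 1 -> TEA_pair (segment x y s) (segment x y t).
Proof.
move=> xy /andP[? ?] /andP[? ?]; rewrite !segmentE.
by apply: TEA_pair_cone; rewrite // subr_ge0.
Qed.

Lemma TEA_pair_segment_eq0 x y t : TEA_pair x y -> 0 <= t <= 1 ->
  segment x y t = 0 -> x = 0 \/ y = 0.
Proof.
move=> xy /andP[t_ge0 t_le1] /(congr1 Num.norm).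
rewrite segmentE TEA_pair_conic ?subr_ge0 // normr0 => /eqP.
rewrite paddr_eq0 ?mulr_ge0 ?subr_ge0 // !mulf_eq0 !normr_eq0 subr_eq0.
case/andP=> /orP[/eqP t1|/eqP ->] /orP[/eqP t0|/eqP ->]; auto.
by move: t1; rewrite t0 => /eqP; rewrite oner_eq0.
Qed.

Lemma TEA_pair_of_parallel_segment x y :
  (forall s t, 0 <= s <= 1 -> 0 <= t <= 1 ->
     parallel_pair (segment x y s) (segment x y t)) ->
  (forall t, 0 <= t <= 1 -> segment x y t != 0) ->
  TEA_pair x y.
Proof.
move=> par nz.
have [c c01 cmin] := EVT_min (@ler01 R)
  (continuous_subspaceT (@continuous_norm_segment x y)).
move: c01; rewrite in_itv /= => c01; set m := `|segment x y c|.
have m_gt0 : 0 < m by rewrite normr_gt0 nz.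
have {}cmin t : 0 <= t <= 1 -> m <= `|segment x y t|.
  by move=> ?; apply: cmin; rewrite in_itv.
pose N := (Num.truncn (`|y - x| / m)).+1.
have yxN : `|y - x| < N%:R * m by rewrite -ltr_pdivrMr ?truncnS_gt.
have N_gt0 : (0 : R) < N%:R by rewrite ltr0n.
pose g j : R := j%:R / (2 * N%:R).
have g01 j : (j <= 2 * N)%N -> 0 <= g j <= 1.
  move=> jN; rewrite divr_ge0 ?mulr_ge0 ?ler0n //=.
  by rewrite ler_pdivrMr ?mulr_gt0 // mul1r -natrM ler_nat.
pose f j := `|segment x y (g j)|.
have fmid j : (j.+2 <= 2 * N)%N -> f j + f j.+2 = f j.+1 *+ 2.
  move=> jN; have g0 := g01 j (leq_trans (leqnSn _) (ltnW jN)).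
  have g2 := g01 _ jN.
  rewrite /f; have -> : g j.+1 = (g j + g j.+2) / 2 by rewrite /g !mulrSr; field.
  apply/norm_segment_midpoint/parallel_pair_TEA; first exact: par.
  rewrite segmentB.
  have -> : g j - g j.+2 = - N%:R^-1 by rewrite /g !mulrSr; field.
  rewrite normrZ normrN ger0_norm ?invr_ge0 ?ltW //.
  rewrite mulrC ltr_pdivrMr // mulrC (lt_le_trans yxN) // ler_pM2l //.
  by rewrite (le_trans (cmin _ g0)) // lerDl.
have f0 : f 0%N = `|x| by rewrite /f /g mul0r segment0.
have f2N : f (2 * N)%N = `|y|.
  by rewrite /f /g natrM divff ?segment1 // mulf_neq0 ?gt_eqF.
have fN : f N *+ 2 = `|x + y|.
  rewrite -[x in x + y](segment0 x y) -[y in _ + y](segment1 x y).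
  rewrite segment_midpoint normrZ ger0_norm // mulr_natl /f.
  suff -> : g N = (0 + 1) / 2 by [].
  by rewrite /g; field; rewrite gt_eqF.
have fA := affine_of_midpoint fmid.
rewrite /TEA_pair -fN -f0 -f2N (fA N) ?(fA (2 * N)%N) ?leq_pmull //.
by rewrite mulnC mulrnA !mulr2n; lra.
Qed.

End ParallelTEA.

Section LinearPreservers.
Variables (R : realType) (X Y : normedModType R) (T : {linear X -> Y}).

Lemma preserves_TEA_parallel : preserves_TEA T -> preserves_parallel T.
Proof.
move=> TEA_T x y [l [l1 xly]]; exists l; split=> //.
have /TEA_T : TEA_pair x (l *: y) by rewrite /TEA_pair normrZ l1 mul1r.
by rewrite /TEA_pair linearZ normrZ l1 mul1r.
Qed.

Lemma preserves_parallel_TEA :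
  injective T -> preserves_parallel T -> preserves_TEA T.
Proof.
move=> Tinj par_T x y xy.
have [nz|] := pselect (forall t, 0 <= t <= 1 -> segment (T x) (T y) t != 0).
  apply: TEA_pair_of_parallel_segment nz => s t s01 t01.
  by rewrite -!linear_segment; apply/par_T/TEA_parallel_pair/TEA_pair_segment.
move=> /existsNP[t /not_implyP[t01 /negP/negbNE/eqP]].
rewrite -linear_segment -(linear0 T) => /Tinj /(TEA_pair_segment_eq0 xy t01).
by case=> ->; rewrite linear0 /TEA_pair normr0 ?add0r ?addr0.
Qed.

End LinearPreservers.

Theorem mainTheorem13 (R : realType) (X Y : completeNormedModType R)
  (hX : finite_dim X) (hY : finite_dim Y)
  (T : {linear X -> Y}) (hT : bijective T) :
  preserves_parallel T <-> preserves_TEA T.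
Proof.
split; [exact: preserves_parallel_TEA (bij_inj hT) | exact: preserves_TEA_parallel].
Qed.
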